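(* Let $T:F\to E$ be a positive linear operator between Archimedean vector lattices, and assume that $F$ or $E$ has the $\sigma$-property. If $H$ is a sublattice of $F$ such that $T|_{H}$ is $\sigma$-order continuous, then $T|_{\overline{H}^{1}}$ and $T|_{\overline{H}}$ are $\sigma$-order continuous, where $\overline{H}^1$ and $\overline H$ are the adherence and the closure of $H$ with respect to the uniform convergence on $F$.
   Context: For $e\in F_+$, $F_e=\bigcup_{\lambda\ge0}\lambda[-e,e]$ with norm $\|f\|_e=\inf\{\lambda\ge0:|f|\le\lambda e\}$. A net $(f_\alpha)$ converges uniformly to $f$ if there is $e\in F_+$ with $f\in F_e$ and, for every $\varepsilon>0$, eventually $\|f_\alpha-f\|_e\le\varepsilon$ (in particular $f_\alpha\in F_e$). The (uniform) adherence $\overline{H}^1$ is the set of uniform limits of nets in $H$; a set is closed if it equals its adherence; $\overline H$ is the intersection of all closed sets containing $H$. A vector lattice has the $\sigma$-property if every countable subset is contained in a principal ideal $F_e$. For a sublattice $G\subset F$, $T|_G$ is $\sigma$-order continuous if for every sequence $(g_n)\subset G$ that is decreasing with infimum $0$ in $G$, the sequence $(Tg_n)$ decreases to $0_E$ (infimum $0$ in $E$). *)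

From HB Require Import structures.
From mathcomp Require Import all_boot all_order all_algebra.
From mathcomp Require Import boolp classical_sets reals.
Set Implicit Arguments. Unset Strict Implicit. Unset Printing Implicit Defensive.
Import Order.TTheory GRing.Theory Num.Theory.
Local Open Scope ring_scope.
Local Open Scope classical_set_scope.

Definition is_sup {V : Type} (le : V -> V -> Prop) (x y s : V) : Prop :=
  [/\ le x s, le y s & forall u, le x u -> le y u -> le s u].

Definition is_inf {V : Type} (le : V -> V -> Prop) (x y s : V) : Prop :=
  [/\ le s x, le s y & forall u, le u x -> le u y -> le u s].

Definition vector_lattice (R : realType) (V : lmodType R)
  (le : V -> V -> Prop) : Prop :=
  (forall x, le x x) /\
  (forall x y, le x y -> le y x -> x = y) /\
  (forall x y z, le x y -> le y z -> le x z) /\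
  (forall x y z, le x y -> le (x + z) (y + z)) /\
  (forall (a : R) x y, 0 <= a -> le x y -> le (a *: x) (a *: y)) /\
  (forall x y, exists s, is_sup le x y s).

Definition archimedean (R : realType) (V : lmodType R)
  (le : V -> V -> Prop) : Prop :=
  forall x y : V, le 0 x -> (forall n : nat, le (n%:R *: x) y) -> x = 0.

Definition abs_le (R : realType) (V : lmodType R) (le : V -> V -> Prop)
  (f g : V) : Prop :=
  forall s, is_sup le f (- f) s -> le s g.

Definition in_ideal (R : realType) (V : lmodType R) (le : V -> V -> Prop)
  (e f : V) : Prop :=
  exists lam : R, 0 <= lam /\ abs_le le f (lam *: e).

Definition enorm (R : realType) (V : lmodType R) (le : V -> V -> Prop)
  (e f : V) : R :=
  inf [set lam : R | 0 <= lam /\ abs_le le f (lam *: e)].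

Definition sigma_property (R : realType) (V : lmodType R)
  (le : V -> V -> Prop) : Prop :=
  forall u : nat -> V, exists e, le 0 e /\ forall n, in_ideal le e (u n).

Definition directed (I : Type) (leI : I -> I -> Prop) : Prop :=
  [/\ inhabited I, (forall i, leI i i),
      (forall i j k, leI i j -> leI j k -> leI i k)
    & (forall i j, exists k, leI i k /\ leI j k)].

Definition uconv (R : realType) (V : lmodType R) (le : V -> V -> Prop)
  (I : Type) (leI : I -> I -> Prop) (x : I -> V) (f : V) : Prop :=
  exists e : V, [/\ le 0 e, in_ideal le e f &
    forall eps : R, 0 < eps -> exists i0 : I, forall i, leI i0 i ->
      in_ideal le e (x i - f) /\ enorm le e (x i - f) <= eps].

Definition adherence (R : realType) (V : lmodType R) (le : V -> V -> Prop)
  (H : set V) : set V :=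
  [set f | exists (I : Type) (leI : I -> I -> Prop) (x : I -> V),
      [/\ directed leI, (forall i, H (x i)) & uconv le leI x f]].

Definition uclosed (R : realType) (V : lmodType R) (le : V -> V -> Prop)
  (S : set V) : Prop := adherence le S = S.

Definition uclosure (R : realType) (V : lmodType R) (le : V -> V -> Prop)
  (H : set V) : set V :=
  [set f | forall S : set V, H `<=` S -> uclosed le S -> S f].

Definition vector_sublattice (R : realType) (V : lmodType R)
  (le : V -> V -> Prop) (G : set V) : Prop :=
  [/\ G 0, (forall x y, G x -> G y -> G (x + y)),
      (forall (a : R) x, G x -> G (a *: x))
    & (forall x y s, G x -> G y -> is_sup le x y s -> G s)].

Definition sigma_oc (R : realType) (F E : lmodType R)
  (leF : F -> F -> Prop) (leE : E -> E -> Prop) (T : F -> E) (G : set F)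
  : Prop :=
  forall g : nat -> F,
    (forall n, G (g n)) ->
    (forall n, leF (g n.+1) (g n)) ->
    (forall n, leF 0 (g n)) ->
    (forall u, G u -> (forall n, leF u (g n)) -> leF u 0) ->
    [/\ (forall n, leE (T (g n.+1)) (T (g n))),
        (forall n, leE 0 (T (g n)))
      & (forall u, (forall n, leE u (T (g n))) -> leE u 0)].

Definition positive_op (R : realType) (F E : lmodType R)
  (leF : F -> F -> Prop) (leE : E -> E -> Prop) (T : F -> E) : Prop :=
  forall x, leF 0 x -> leE 0 (T x).

(* Factor T = psi \o phi through positive operators, with phi : F -> W and W
   having the sigma-property (W = F and phi = id, or W = E and psi = id). Call f
   approximable if, for some z >= 0 in W and every eps > 0, there are a_j in H
   and C_n >= 0 with f - C_n <= a_0, ..., a_n, phi C_n <= eps z, and every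
   common lower bound of the a_j^+ below f^+.
   If g_m decreases to 0 in G with H <= G <= approximable, merging the
   sequences approximating all g_m (with tolerances eps 2^-(m+1), made uniform
   by the sigma-property) and taking running infima of their positive parts
   gives k_t decreasing to 0 in H with g_t <= k_t + C_t and T C_t <= eps psi z;
   continuity on H and the Archimedean property of E then force inf T g_t = 0.
   Approximability also passes to uniform limits: if |x_k - f| <= 2^-(k+1) e,
   approximate f by the tail x_K, x_(K+1), ... whose total error is at most
   2^-K e, and use the Archimedean property of F for the condition on f^+.
   Hence the adherence and the closure of H are approximable. *)

From mathcomp Require Import all_boot all_order all_algebra.
From mathcomp Require Import boolp classical_sets reals.
From mathcomp Require Import lra zify.
From Stdlib Require Cantor.
Set Implicit Arguments. Unset Strict Implicit. Unset Printing Implicit Defensive.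
Import Order.TTheory GRing.Theory Num.Theory.
Local Open Scope ring_scope.
Local Open Scope classical_set_scope.

Section VectorLattice.
Variables (R : realType) (V : lmodType R) (le : V -> V -> Prop).
Hypothesis vl : vector_lattice le.

Lemma vl_refl x : le x x.
Proof. by case: vl. Qed.

Lemma vl_trans x y z : le x y -> le y z -> le x z.
Proof. by case: vl => _ [_ [trans _]]; exact: trans. Qed.
Arguments vl_trans {x y z}.

Lemma vl_addr z x y : le x y -> le (x + z) (y + z).
Proof. by case: vl => _ [_ [_ [addr _]]]; exact: addr. Qed.

Lemma vl_scale (a : R) x y : 0 <= a -> le x y -> le (a *: x) (a *: y).
Proof. by case: vl => _ [_ [_ [_ [scale _]]]]; exact: scale. Qed.

Lemma vl_addl z x y : le x y -> le (z + x) (z + y).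
Proof. by rewrite ![z + _]addrC; exact: vl_addr. Qed.

Lemma vl_add x y x' y' : le x y -> le x' y' -> le (x + x') (y + y').
Proof. by move=> h h'; exact: vl_trans (vl_addr x' h) (vl_addl y h'). Qed.

Lemma vl_addr_ge0 x y : le 0 y -> le x (x + y).
Proof. by rewrite -{1}[x]addr0; exact: vl_addl. Qed.

Lemma vl_lerBlDr x y z : le (x - y) z <-> le x (z + y).
Proof.
split=> [/(vl_addr y)|/(vl_addr (- y))]; first by rewrite subrK.
by rewrite addrK.
Qed.

Lemma vl_subr_ge0 x y : le 0 (y - x) <-> le x y.
Proof.
split=> [/vl_lerBlDr|h]; first by rewrite opprK add0r.
by apply/vl_lerBlDr; rewrite opprK add0r.
Qed.

Lemma vl_opp x y : le (- x) (- y) <-> le y x.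
Proof.
split=> [|h]; last by apply/vl_subr_ge0; rewrite opprK addrC; exact/vl_subr_ge0.
by move/vl_subr_ge0; rewrite opprK addrC => /vl_subr_ge0.
Qed.

Lemma vl_scale_ge0 (a : R) x : 0 <= a -> le 0 x -> le 0 (a *: x).
Proof. by move=> a0 /(vl_scale a0); rewrite scaler0. Qed.

Lemma vl_scalel (a b : R) x : le 0 x -> a <= b -> le (a *: x) (b *: x).
Proof.
move=> x0 ab; apply/vl_subr_ge0; rewrite -scalerBl.
by apply: vl_scale_ge0; rewrite ?subr_ge0.
Qed.

Lemma vl_sup_ex x y : exists s, is_sup le x y s.
Proof. by case: vl => _ [_ [_ [_ [_ sup]]]]; exact: sup. Qed.

Definition vsup x y : V := projT1 (cid (vl_sup_ex x y)).

Lemma vsupP x y : is_sup le x y (vsup x y).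
Proof. exact: projT2 (cid _). Qed.

Lemma le_vsupl x y : le x (vsup x y). Proof. by case: (vsupP x y). Qed.
Lemma le_vsupr x y : le y (vsup x y). Proof. by case: (vsupP x y). Qed.

Lemma vsup_le x y z : le (vsup x y) z <-> le x z /\ le y z.
Proof.
case: (vsupP x y) => hx hy lub.
by split=> [h|[]]; [split; [exact: vl_trans hx h | exact: vl_trans hy h] | exact: lub].
Qed.

Definition vinf x y := - vsup (- x) (- y).

Lemma le_vinfl x y : le (vinf x y) x.
Proof. by rewrite /vinf -[x in le _ x]opprK; apply/vl_opp; exact: le_vsupl. Qed.

Lemma le_vinfr x y : le (vinf x y) y.
Proof. by rewrite /vinf -[y in le _ y]opprK; apply/vl_opp; exact: le_vsupr. Qed.

Lemma le_vinf z x y : le z x -> le z y -> le z (vinf x y).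
Proof.
by move=> zx zy; rewrite /vinf -[z]opprK; apply/vl_opp/vsup_le; split; exact/vl_opp.
Qed.

Definition vpos x := vsup x 0.

Lemma le_vpos x : le x (vpos x). Proof. exact: le_vsupl. Qed.
Lemma vpos_ge0 x : le 0 (vpos x). Proof. exact: le_vsupr. Qed.
Lemma vpos_le x z : le (vpos x) z <-> le x z /\ le 0 z. Proof. exact: vsup_le. Qed.

Lemma vl_nonincreasing (g : nat -> V) : (forall n, le (g n.+1) (g n)) ->
  forall m n, (m <= n)%N -> le (g n) (g m).
Proof.
move=> gS m n /subnK <-; elim: (n - m)%N => [|k IH]; first exact: vl_refl.
by rewrite addSn; exact: vl_trans (gS _) IH.
Qed.

Lemma vl_sum_ge0 I (r : seq I) (P : pred I) (x : I -> V) :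
  (forall i, P i -> le 0 (x i)) -> le 0 (\sum_(i <- r | P i) x i).
Proof.
move=> x0; apply: big_ind => //; first exact: vl_refl.
by move=> a b a0 b0; rewrite -(addr0 0); exact: vl_add.
Qed.

Lemma vl_le_sum (x : nat -> V) n i : (forall k, le 0 (x k)) -> (i < n)%N ->
  le (x i) (\sum_(k < n) x k).
Proof.
move=> x0 ltin; rewrite (bigD1 (Ordinal ltin)) //=.
by apply: vl_addr_ge0; apply: vl_sum_ge0.
Qed.

Lemma vl_sum_le_scale (x : nat -> V) (c : nat -> R) e n :
  (forall k, le (x k) (c k *: e)) ->
  le (\sum_(k < n) x k) ((\sum_(k < n) c k) *: e).
Proof.
move=> xc; rewrite scaler_suml; apply: big_ind2 => //; first exact: vl_refl.
by move=> *; exact: vl_add.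
Qed.

Lemma abs_le_le v g : abs_le le v g -> le v g /\ le (- v) g.
Proof.
move/(_ _ (vsupP v (- v))) => hv.
by split; apply: vl_trans hv; [exact: le_vsupl | exact: le_vsupr].
Qed.

Lemma sigma_dominate : sigma_property le -> forall u : nat -> V,
  exists e (lam : nat -> R), [/\ le 0 e, forall n, 0 <= lam n
    & forall n, le (u n) (lam n *: e)].
Proof.
move=> sig u; have [e [e0 ue]] := sig u.
have /choice [lam hlam] : forall n, exists l : R, 0 <= l /\ le (u n) (l *: e).
  by move=> n; have [l [l0 /abs_le_le[]]] := ue n; exists l.
by exists e, lam; split=> // n; case: (hlam n).
Qed.

Fixpoint running_inf (c : nat -> V) (t : nat) : V :=
  if t is t'.+1 then vinf (running_inf c t') (c t) else c 0%N.

Lemma running_inf_le c t : le (running_inf c t.+1) (running_inf c t).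
Proof. exact: le_vinfl. Qed.

Lemma le_running_inf c t y :
  le y (running_inf c t) <-> forall s, (s <= t)%N -> le y (c s).
Proof.
elim: t => [|t IH] /=.
  by split=> [h s|]; [rewrite leqn0 => /eqP -> | apply].
split=> [h s|h]; last first.
  by apply: le_vinf; [apply/IH => s st; apply: h; exact: leqW | exact: h].
rewrite leq_eqVlt => /orP[/eqP -> | st]; first exact: vl_trans h (le_vinfr _ _).
by rewrite ltnS in st; exact: (IH.1 (vl_trans h (le_vinfl _ _))).
Qed.

Lemma sublattice_vpos (G : set V) x : vector_sublattice le G -> G x -> G (vpos x).
Proof. by case=> G0 _ _ Gsup Gx; exact: Gsup Gx G0 (vsupP x 0). Qed.

Lemma sublattice_vinf (G : set V) x y :
  vector_sublattice le G -> G x -> G y -> G (vinf x y).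
Proof.
case=> _ _ GZ Gsup Gx Gy.
have GN u : G u -> G (- u) by rewrite -scaleN1r; exact: GZ.
exact: GN (Gsup _ _ _ (GN _ Gx) (GN _ Gy) (vsupP _ _)).
Qed.

Lemma sublattice_running_inf (G : set V) c t :
  vector_sublattice le G -> (forall s, G (c s)) -> G (running_inf c t).
Proof.
move=> Gsub Gc; elim: t => [|t IH] /=; first exact: Gc.
exact: sublattice_vinf.
Qed.

Definition diag_enum (a : nat -> nat -> V) (t : nat) : V :=
  a (Cantor.of_nat t).1 (Cantor.of_nat t).2.

Lemma diag_enum_surj a m j : exists t, diag_enum a t = a m j.
Proof. by exists (Cantor.to_nat (m, j)); rewrite /diag_enum Cantor.cancel_of_to. Qed.

Lemma le_diag_enum (h : V) (Z : nat -> V) (a : nat -> nat -> V) n t :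
  (forall m, le 0 (Z m)) ->
  (forall m j, (m <= n)%N -> (j <= n)%N -> le (h - Z m) (a m j)) ->
  (t <= n)%N -> le (h - \sum_(m < n.+1) Z m) (diag_enum a t).
Proof.
move=> Z0 hZ tn; rewrite /diag_enum; case E: (Cantor.of_nat t) => [m j] /=.
have mjt : (j + m <= t)%N.
  by have := Cantor.to_nat_non_decreasing m j; rewrite -E Cantor.cancel_to_of; lia.
apply: vl_trans (hZ m j _ _); [|lia|lia].
by apply/vl_addl/vl_opp; apply: vl_le_sum => //; lia.
Qed.

Lemma subset_adherence (S : set V) : S `<=` adherence le S.
Proof.
move=> f Sf; exists unit, (fun _ _ => True), (fun _ => f); split=> //.
exists (vpos f + vpos (- f)); split.
- by rewrite -(addr0 0); apply: vl_add; exact: vpos_ge0.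
- exists 1; split=> // s [_ _ lub]; rewrite scale1r; apply: lub.
    exact: vl_trans (le_vpos f) (vl_addr_ge0 _ (vpos_ge0 _)).
  by rewrite addrC; exact: vl_trans (le_vpos (- f)) (vl_addr_ge0 _ (vpos_ge0 _)).
- move=> eps eps0; exists tt => _ _; rewrite subrr.
  have abs0 : abs_le le 0 (0 *: (vpos f + vpos (- f))).
    by move=> s [_ _ lub]; rewrite scale0r; apply: lub; rewrite ?oppr0; exact: vl_refl.
  split; first by exists 0.
  by apply: le_trans (ltW eps0); apply: ge_inf; [exists 0 => l [] | split].
Qed.

Lemma uconv_seq I (leI : I -> I -> Prop) (x : I -> V) f :
  directed leI -> uconv le leI x f ->
  exists2 e, le 0 e & forall d : nat -> R, (forall k, 0 < d k) ->
    exists (i : nat -> I) (l : nat -> R), forall k,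
      [/\ 0 <= l k, l k <= d k & abs_le le (x (i k) - f) (l k *: e)].
Proof.
case=> _ reflI _ _ [e [e0 _ conv]]; exists e => // d d0.
suff /choice[i /choice[l il]] : forall k, exists i (l : R),
    [/\ 0 <= l, l <= d k & abs_le le (x i - f) (l *: e)] by exists i, l.
move=> k; have [|i0 near] := conv (d k / 2); first by rewrite divr_gt0.
have [[l1 l1P] small] := near i0 (reflI i0).
have ne : [set l : R | 0 <= l /\ abs_le le (x i0 - f) (l *: e)] !=set0 by exists l1.
have lt : enorm le e (x i0 - f) < d k by have := d0 k; lra.
have [l [l0 hl] ld] := inf_lt ne lt.
by exists i0, l; split=> //; exact: ltW.
Qed.

Lemma le_running_inf_diag (g : nat -> V) (a : nat -> nat -> V) w :
  (forall m, le 0 (g m)) ->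
  (forall m w, (forall j, le w (vpos (a m j))) -> le w (vpos (g m))) ->
  (forall t, le w (running_inf (vpos \o diag_enum a) t)) -> forall m, le w (g m).
Proof.
move=> g0 ga wk m; apply: vl_trans (ga m w _) _ => [j|].
  have [t <-] := diag_enum_surj a m j.
  by move/le_running_inf: (wk t) => /(_ t (leqnn t)).
by apply/vpos_le; split; [exact: vl_refl | exact: g0].
Qed.

Lemma sub_sum_le_running_inf (g : nat -> V) (a C : nat -> nat -> V) t :
  (forall n, le (g n.+1) (g n)) -> (forall m n, le 0 (C m n)) ->
  (forall m n j, (j <= n)%N -> le (g m - C m n) (a m j)) ->
  le (g t - \sum_(m < t.+1) C m t) (running_inf (vpos \o diag_enum a) t).
Proof.
move=> gS C0 gC; apply/le_running_inf => s st; apply: vl_trans (le_vpos _).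
apply: (le_diag_enum (Z := fun m => C m t)) => // m j mt jt.
by apply: vl_trans (gC m t j jt); apply: vl_addr; exact: vl_nonincreasing gS _ _ mt.
Qed.

Hypothesis arch : archimedean le.

Lemma archimedean_le0 e y : le 0 e -> (forall r : R, 0 < r -> le y (r *: e)) -> le y 0.
Proof.
move=> e0 ye; apply: vl_trans (le_vpos y) _.
suff -> : vpos y = 0 by exact: vl_refl.
apply: (@arch _ e (vpos_ge0 y)) => n.
have n1 : (0 : R) < n.+1%:R by rewrite ltr0Sn.
have : le (vpos y) (n.+1%:R^-1 *: e).
  apply/vpos_le; split; first by apply: ye; rewrite invr_gt0.
  by apply: vl_scale_ge0 e0; rewrite invr_ge0 ltW.
move=> /(vl_scale (ltW n1)); rewrite scalerA mulfV ?gt_eqF // scale1r => /(vl_trans _).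
by apply; apply: vl_scalel; [exact: vpos_ge0 | rewrite ler_nat].
Qed.

Lemma le_vpos_of_near f w e (y : nat -> V) (l : nat -> R) :
  le 0 e -> (forall k, le (y k - f) (l k *: e)) ->
  (forall r, 0 < r -> exists k, l k <= r) ->
  (forall k, le w (vpos (y k))) -> le w (vpos f).
Proof.
move=> e0 yf lsmall wy; rewrite -[vpos f]add0r; apply/vl_lerBlDr.
apply: (archimedean_le0 e0) => r r0; have [k lk] := lsmall r r0.
apply/vl_lerBlDr; apply: vl_trans (wy k) _; apply/vpos_le; split.
  have /vl_lerBlDr yk := yf k.
  exact: vl_trans yk (vl_add (vl_scalel e0 lk) (le_vpos f)).
by rewrite -(addr0 0); apply: vl_add (vpos_ge0 f); exact: vl_scale_ge0 (ltW r0) e0.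
Qed.

Lemma le0_of_eps_approx (u z : V) (x : nat -> V) : le 0 z ->
  (forall eps : R, 0 < eps -> exists k : nat -> V,
     (forall v, (forall t, le v (k t)) -> le v 0) /\
     (forall t, le (x t) (k t + eps *: z))) ->
  (forall t, le u (x t)) -> le u 0.
Proof.
move=> z0 approx ux; apply: (archimedean_le0 z0) => r r0.
have [k [kinf xk]] := approx r r0.
rewrite -[r *: z]add0r; apply/vl_lerBlDr; apply: kinf => t.
by apply/vl_lerBlDr; exact: vl_trans (ux t) (xk t).
Qed.

End VectorLattice.

Section HalfPowers.
Variable R : realType.
Local Notation q := ((2 : R)^-1).

Lemma halfX_gt0 n : 0 < q ^+ n.
Proof. by rewrite exprn_gt0 // invr_gt0. Qed.

Lemma halfX_sum_le1 n : \sum_(k < n) q ^+ k.+1 <= 1.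
Proof.
suff -> : \sum_(k < n) q ^+ k.+1 = 1 - q ^+ n by rewrite lerBlDr lerDl ltW ?halfX_gt0.
elim: n => [|n IH]; first by rewrite big_ord0 expr0 subrr.
by rewrite big_ord_recr /= IH !exprS; lra.
Qed.

Lemma halfX_tail_le K n : \sum_(k < n) q ^+ (K + k).+1 <= q ^+ K.
Proof.
under eq_bigr => k _ do rewrite -addnS exprD.
by rewrite -mulr_sumr ler_piMr ?halfX_sum_le1 // ltW ?halfX_gt0.
Qed.

Lemma halfX_small (r : R) : 0 < r -> exists K, q ^+ K <= r.
Proof.
move=> r0; set N := Num.Def.archi_bound r^-1; exists N.
have rN : r^-1 <= N%:R by apply/ltW/archi_boundP; rewrite invr_ge0 ltW.
have N2 : (N%:R : R) <= 2 ^+ N by rewrite -natrX ler_nat; exact/ltnW/ltn_expl.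
rewrite exprVn -[r]invrK lef_pV2 ?posrE ?exprn_gt0 ?invr_gt0 //.
exact: le_trans rN N2.
Qed.

Lemma halfX_shift_small (l : nat -> R) K r :
  (forall k, l k <= q ^+ k.+1) -> 0 < r -> exists k, l (K + k)%N <= r.
Proof.
move=> lq r0; have [k qk] := halfX_small r0; exists k.
apply: le_trans (lq _) (le_trans _ qk).
by apply: ler_wiXn2l; [rewrite invr_ge0 | rewrite invf_le1 // ler1n | lia].
Qed.

End HalfPowers.

Lemma adherenceS (R : realType) (V : lmodType R) (le : V -> V -> Prop)
  (S S' : set V) :
  S `<=` S' -> adherence le S `<=` adherence le S'.
Proof.
move=> SS' f [I [leI [x [dirI Sx conv]]]].
by exists I, leI, x; split=> // i; exact: SS'.
Qed.

Lemma positive_op_le (R : realType) (F E : lmodType R)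
  (leF : F -> F -> Prop) (leE : E -> E -> Prop)
  (vlF : vector_lattice leF) (vlE : vector_lattice leE) (T : {linear F -> E}) :
  positive_op leF leE T -> forall x y, leF x y -> leE (T x) (T y).
Proof.
by move=> Tpos x y /(vl_subr_ge0 vlF)/Tpos; rewrite linearB => /(vl_subr_ge0 vlE).
Qed.

Lemma linear_sum_le_scale (R : realType) (F W : lmodType R)
  (leW : W -> W -> Prop) (vlW : vector_lattice leW) (phi : {linear F -> W})
  (Z : nat -> F) (c : nat -> R) (z : W) (eps : R) n :
  leW 0 z -> (forall k, leW (phi (Z k)) (c k *: z)) -> \sum_(k < n) c k <= eps ->
  leW (phi (\sum_(k < n) Z k)) (eps *: z).
Proof.
move=> z0 Zc ceps; rewrite linear_sum.
exact: (vl_trans vlW (vl_sum_le_scale vlW n Zc) (vl_scalel vlW z0 ceps)).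
Qed.

Section Approximation.
Variables (R : realType) (F E W : lmodType R).
Variables (leF : F -> F -> Prop) (leE : E -> E -> Prop) (leW : W -> W -> Prop).
Hypotheses (vlF : vector_lattice leF) (vlE : vector_lattice leE)
  (vlW : vector_lattice leW).
Hypotheses (archF : archimedean leF) (archE : archimedean leE).
Hypothesis sigW : sigma_property leW.
Variables (T : {linear F -> E}) (phi : {linear F -> W}) (psi : {linear W -> E}).
Hypotheses (Tpos : positive_op leF leE T) (phipos : positive_op leF leW phi)
  (psipos : positive_op leW leE psi).
Hypothesis Tfactor : forall x, psi (phi x) = T x.
Variable H : set F.
Hypotheses (Hsub : vector_sublattice leF H) (Hoc : sigma_oc leF leE T H).

Local Notation q := ((2 : R)^-1).
Local Notation vposF := (vpos vlF).

Definition approximable (f : F) : Prop :=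
  exists z, leW 0 z /\ forall eps : R, 0 < eps ->
    exists a C : nat -> F, [/\ forall j, H (a j),
      forall w, (forall j, leF w (vposF (a j))) -> leF w (vposF f),
      forall n, leF 0 (C n),
      forall n j, (j <= n)%N -> leF (f - C n) (a j)
    & forall n, leW (phi (C n)) (eps *: z)].

Lemma subset_approximable : H `<=` approximable.
Proof.
move=> f Hf; exists 0; split=> [|eps _]; first exact: vl_refl.
exists (fun=> f), (fun=> 0); split=> [//|w /(_ 0%N) //|n|n j _|n].
- exact: vl_refl.
- by rewrite subr0; exact: vl_refl.
- by rewrite linear0 scaler0; exact: vl_refl.
Qed.

Lemma approximable_uniform (y : nat -> F) : (forall m, approximable (y m)) ->
  exists z, leW 0 z /\ forall delta : nat -> R, (forall m, 0 < delta m) ->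
    exists a C : nat -> nat -> F, [/\ forall m j, H (a m j),
      forall m w, (forall j, leF w (vposF (a m j))) -> leF w (vposF (y m)),
      forall m n, leF 0 (C m n),
      forall m n j, (j <= n)%N -> leF (y m - C m n) (a m j)
    & forall m n, leW (phi (C m n)) (delta m *: z)].
Proof.
move=> /choice[zs hzs].
have [z [lam [z0 lam0 zslam]]] := sigma_dominate vlW sigW zs.
exists z; split=> // delta delta0.
pose eps m := delta m / (lam m + 1).
have lam1 m : 0 < lam m + 1 by have := lam0 m; lra.
have /choice[a /choice[C hC]] : forall m, exists a C : nat -> F,
    [/\ forall j, H (a j),
      forall w, (forall j, leF w (vposF (a j))) -> leF w (vposF (y m)),
      forall n, leF 0 (C n),
      forall n j, (j <= n)%N -> leF (y m - C n) (a j)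
    & forall n, leW (phi (C n)) (eps m *: zs m)].
  by move=> m; exact: (hzs m).2 _ (divr_gt0 (delta0 m) (lam1 m)).
exists a, C; split=> [m|m|m|m|m n]; try by case: (hC m).
case: (hC m) => _ _ _ _ /(_ n) phiC; apply: (vl_trans vlW phiC).
apply: (vl_trans vlW (vl_scale vlW _ (zslam m))); first by rewrite divr_ge0 ?ltW.
rewrite scalerA; apply: (vl_scalel vlW z0).
by rewrite mulrAC ler_pdivrMr // ler_pM2l // lerDl.
Qed.

Lemma adherence_approximable : adherence leF approximable `<=` approximable.
Proof.
move=> f [I [leI [x [dirI xapp conv]]]].
have [e e0 /(_ (fun k => q ^+ k.+1) (fun k => halfX_gt0 _ _))[i [l hil]]] :=
  uconv_seq dirI conv.
have l0 k : 0 <= l k by case: (hil k).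
have lq k : l k <= q ^+ k.+1 by case: (hil k).
have xf k : leF (x (i k) - f) (l k *: e) /\ leF (- (x (i k) - f)) (l k *: e).
  by case: (hil k) => _ _ /(abs_le_le vlF).
have [z [z0 hz]] := approximable_uniform (fun k => xapp (i k)).
have phie0 : leW 0 (phi e) := phipos e0.
have phie_le : leW (phi e) (phi e + z) := vl_addr_ge0 vlW _ z0.
have z_le : leW z (phi e + z) by rewrite addrC; exact: (vl_addr_ge0 vlW z phie0).
have z'0 : leW 0 (phi e + z) := vl_trans vlW phie0 phie_le.
exists (phi e + z); split=> // eps eps0.
have [K hK] : exists K, q ^+ K <= eps / 2 by apply: halfX_small; rewrite divr_gt0.
have [|a [C [Ha Hlb C0 HC Hphi]]] := hz (fun k => q ^+ k.+1).
  by move=> k; exact: halfX_gt0.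
pose Z n k := l (K + k)%N *: e + C (K + k)%N n.
have Z0 n k : leF 0 (Z n k).
  by rewrite -(addr0 0); exact: (vl_add vlF (vl_scale_ge0 vlF (l0 _) e0) (C0 _ _)).
exists (diag_enum (fun k j => a (K + k)%N j)), (fun n => \sum_(k < n.+1) Z n k).
split=> [t|w wa|n|n t tn|n].
- exact: Ha.
- apply: (le_vpos_of_near archF (y := fun k => x (i (K + k)%N))
    (l := fun k => l (K + k)%N) e0) => [k|r|k].
  + exact: (xf _).1.
  + exact: halfX_shift_small.
  + apply: Hlb => j; have [t <-] := diag_enum_surj (fun k j => a (K + k)%N j) k j.
    exact: wa.
- exact: (vl_sum_ge0 vlF).
- apply: (le_diag_enum vlF) => // k j _ jn; apply: (vl_trans vlF _ (HC _ n j jn)).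
  rewrite /Z opprD addrA; apply: (vl_addr vlF); apply/(vl_lerBlDr vlF); rewrite addrC.
  by apply/(vl_lerBlDr vlF); rewrite -opprB; exact: (xf _).2.
- have phiZ k : leW (phi (Z n k))
      ((q ^+ (K + k).+1 + q ^+ (K + k).+1) *: (phi e + z)).
    rewrite /Z linearD linearZ scalerDl; apply: (vl_add vlW).
      apply: (vl_trans vlW (vl_scalel vlW phie0 (lq _))).
      exact: (vl_scale vlW (ltW (halfX_gt0 _ _)) phie_le).
    apply: (vl_trans vlW (Hphi _ n)).
    exact: (vl_scale vlW (ltW (halfX_gt0 _ _)) z_le).
  apply: (linear_sum_le_scale vlW z'0 phiZ); rewrite big_split /=.
  by have := halfX_tail_le R K n.+1; lra.
Qed.

Lemma sigma_oc_approximable (G : set F) :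
  H `<=` G -> G `<=` approximable -> sigma_oc leF leE T G.
Proof.
move=> HG Gapp g Gg gS g0 ginf.
have Tle := positive_op_le vlF vlE Tpos.
split=> [n|n|u uTg]; [exact/Tle/gS | exact/Tpos/g0 |].
have [z [z0 hz]] := approximable_uniform (fun m => Gapp _ (Gg m)).
apply: (le0_of_eps_approx vlE archE (psipos z0) _ uTg) => eps eps0.
have [|a [C [Ha Hlb C0 HC Hphi]]] := hz (fun m => eps * q ^+ m.+1).
  by move=> m; rewrite mulr_gt0 ?halfX_gt0.
pose k := running_inf vlF (vposF \o diag_enum a).
have Hk t : H (k t).
  by apply: sublattice_running_inf Hsub _ => s; exact: sublattice_vpos Hsub (Ha _ _).
have k0 t : leF 0 (k t) by apply/le_running_inf => s _; exact: vpos_ge0.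
have kinf w : H w -> (forall t, leF w (k t)) -> leF w 0.
  by move=> Hw wk; apply: ginf (HG _ Hw) (le_running_inf_diag g0 Hlb wk).
have [_ _ Tk0] := Hoc Hk (running_inf_le vlF _) k0 kinf.
exists (fun t => T (k t)); split=> // t.
have phiC : leW (phi (\sum_(m < t.+1) C m t)) (eps *: z).
  apply: (linear_sum_le_scale vlW z0 (Hphi^~ t)); rewrite -mulr_sumr.
  by have := halfX_sum_le1 R t.+1; nra.
have gk : leF (g t - \sum_(m < t.+1) C m t) (k t) :=
  sub_sum_le_running_inf vlF t gS C0 HC.
rewrite -(subrK (\sum_(m < t.+1) C m t) (g t)) linearD.
apply: (vl_add vlE (Tle _ _ gk)).
by rewrite -Tfactor -linearZ; exact: (positive_op_le vlW vlE psipos phiC).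
Qed.

Lemma sigma_oc_adherence_uclosure :
  sigma_oc leF leE T (adherence leF H) /\ sigma_oc leF leE T (uclosure leF H).
Proof.
have closed : uclosed leF approximable.
  by apply/seteqP; split; [exact: adherence_approximable | exact: subset_adherence].
split; apply: sigma_oc_approximable.
- exact: subset_adherence.
- by move=> f /(adherenceS subset_approximable); exact: adherence_approximable.
- by move=> f Hf S HS _; exact: HS.
- by move=> f; apply; [exact: subset_approximable | exact: closed].
Qed.

End Approximation.

Theorem theorem10p3 (R : realType) (F E : lmodType R)
  (leF : F -> F -> Prop) (leE : E -> E -> Prop)
  (vlF : vector_lattice leF) (vlE : vector_lattice leE)
  (archF : archimedean leF) (archE : archimedean leE)
  (sigma : sigma_property leF \/ sigma_property leE)
  (T : {linear F -> E}) (Tpos : positive_op leF leE T)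
  (H : set F) (Hsub : vector_sublattice leF H)
  (Hoc : sigma_oc leF leE T H) :
  sigma_oc leF leE T (adherence leF H) /\ sigma_oc leF leE T (uclosure leF H).
Proof.
case: sigma => [sigF | sigE].
- exact: (sigma_oc_adherence_uclosure vlF vlE vlF archF archE sigF
    (phi := idfun) Tpos (fun _ x0 => x0) Tpos (fun=> erefl) Hsub Hoc).
- exact: (sigma_oc_adherence_uclosure vlF vlE vlE archF archE sigE
    (psi := idfun) Tpos Tpos (fun _ x0 => x0) (fun=> erefl) Hsub Hoc).
Qed.
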